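(* Let $S\subset\mathbb{R}^2$ be a set of $n>4$ points in general position. Then there exists a Radon partition $P$ of $S$ whose degree in the Radon partition graph $G_T[S,2]$ is exactly $n-3$.
   Context: A Radon partition of a finite set $S\subset\mathbb{R}^d$ is a partition of $S$ into two nonempty disjoint parts $P_1,P_2$ (unordered) with $\operatorname{conv}(P_1)\cap\operatorname{conv}(P_2)\neq\emptyset$. For two partitions $P,P'$ of $S$, the partition distance $D(P,P')$ is the minimum number of elements of $S$ that must be removed so that $P$ and $P'$ restricted to the remaining elements coincide. The Radon partition graph $G_T[S,2]$ has as vertices all Radon partitions of $S$, with an edge between $P$ and $P'$ if and only if $D(P,P')=1$. *)

(* Points of R^2 are row vectors 'rV[R]_2 over a realType R;
   a set S of n points is an injective labelling p : 'I_n -> 'rV[R]_2. *)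
From HB Require Import structures.
From mathcomp Require Import all_boot all_order all_algebra.
From mathcomp Require Import reals.
Set Implicit Arguments. Unset Strict Implicit. Unset Printing Implicit Defensive.
Import Order.TTheory GRing.Theory Num.Theory.
Local Open Scope ring_scope.

Section Radon.
Variables (R : realType) (n : nat).

Definition in_conv (p : 'I_n -> 'rV[R]_2) (A : {set 'I_n}) (x : 'rV[R]_2) : Prop :=
  exists w : 'I_n -> R,
    [/\ forall i, 0 <= w i,
        forall i, i \notin A -> w i = 0,
        \sum_i w i = 1
      & x = \sum_i w i *: p i].

Definition collinear3 (a b c : 'rV[R]_2) : bool :=
  (b ord0 0 - a ord0 0) * (c ord0 1 - a ord0 1)
  - (b ord0 1 - a ord0 1) * (c ord0 0 - a ord0 0) == 0.

Definition general_position (p : 'I_n -> 'rV[R]_2) : Prop :=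
  injective p /\
  forall i j k : 'I_n, i != j -> j != k -> i != k -> ~~ collinear3 (p i) (p j) (p k).

(* An (unordered) partition of the point set into two blocks is represented
   by its set of blocks P, with P a partition of the index set and #|P| = 2
   (so both blocks are nonempty). *)
Definition two_partition (P : {set {set 'I_n}}) : bool :=
  partition P [set: 'I_n] && (#|P| == 2)%N.

Definition radon_partition (p : 'I_n -> 'rV[R]_2) (P : {set {set 'I_n}}) : Prop :=
  two_partition P /\ exists x, forall B, B \in P -> in_conv p B x.

Definition restrict (P : {set {set 'I_n}}) (X : {set 'I_n}) : {set {set 'I_n}} :=
  [set B :&: X | B in P].

(* partition distance: minimal number of removed elements so that the
   restrictions coincide (removing everything always works) *)
Definition pdist (P Q : {set {set 'I_n}}) : nat :=
  \big[minn/n]_(X : {set 'I_n} | restrict P X == restrict Q X) #|~: X|.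

Definition radon_adj (p : 'I_n -> 'rV[R]_2) (P Q : {set {set 'I_n}}) : Prop :=
  radon_partition p Q /\ pdist P Q = 1%N.

End Radon.

(* Shear the plane so that the points have distinct abscissae and pick a triple
   (i, j, k) minimising the vertical distance from one point to the line through
   the other two.  Minimality puts k horizontally between i and j, and puts every
   other point w in the double wedge at k spanned by the lines ki and kj, beyond k
   or beyond the edge ij: otherwise the line through i (or j) and w would pass
   vertically closer to k.  Let A consist of i, j and the points beyond k.  Any
   further point gives a common point of the hulls of A and of its complement
   (k lies in a triangle, or two segments cross), and with n > 4 this persists
   when a single point other than i, j, k changes sides.  Moving i, j or k
   instead produces a bipartition separated by a line of the triangle ijk.  The
   partitions at distance one from A are exactly these single moves, so A has
   degree n - 3. *)

From HB Require Import structures.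
From mathcomp Require Import all_boot all_order all_algebra.
From mathcomp Require Import reals.
From mathcomp Require Import ring lra zify.
Set Implicit Arguments. Unset Strict Implicit. Unset Printing Implicit Defensive.
Import Order.TTheory GRing.Theory Num.Theory.

Section Bipartitions.
Variable n : nat.
Implicit Types (A C X : {set 'I_n}) (P Q : {set {set 'I_n}}) (x y : 'I_n).

Definition bipart A : {set {set 'I_n}} := [set A; ~: A].

Definition toggle A x : {set 'I_n} := [set y | (y \in A) != (y == x)].

Lemma in_toggle A x y : (y \in toggle A x) = ((y \in A) != (y == x)).
Proof. by rewrite inE. Qed.

Lemma bipartC A : bipart (~: A) = bipart A.
Proof. by rewrite /bipart setCK setUC. Qed.

Lemma toggleC A x : toggle (~: A) x = ~: toggle A x.
Proof. by apply/setP => y; rewrite !inE; case: (y \in A); case: (y == x). Qed.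

Lemma two_partition_bipart A : A != set0 -> A != setT -> two_partition (bipart A).
Proof.
move=> A0 AT; have AC : A != ~: A.
  apply: contraNneq A0 => AC; apply/eqP/setP => y.
  by rewrite inE; apply/idP => Ay; move: (Ay); rewrite {1}AC inE Ay.
apply/andP; split; last by rewrite cards2 AC.
apply/and3P; split.
- by rewrite /cover bigcup_setU !big_set1 setUCr.
- apply/trivIsetP => B B'; rewrite !inE.
  by move=> /orP[]/eqP-> /orP[]/eqP->; rewrite ?eqxx // => _;
     rewrite -setI_eq0 ?setICr // setIC setICr.
- by rewrite !inE negb_or eq_sym A0 -setCT (inj_eq (@setC_inj _)) eq_sym.
Qed.

Lemma two_partitionP P : two_partition P -> exists A, P = bipart A.
Proof.
case/andP=> /and3P[/eqP coverP trivP _] /cards2P[A [B [AB EP]]].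
rewrite EP /cover bigcup_setU !big_set1 in coverP trivP *.
have /disjoint_setI0 AB0 : [disjoint A & B].
  by move/trivIsetP: trivP; apply; rewrite ?inE ?eqxx ?orbT.
exists A; congr [set _; _]; apply/setP => y; rewrite inE.
have [Ay | nAy] := boolP (y \in A).
  by apply/negP => By; have := in_set0 y; rewrite -AB0 inE Ay By.
by have := in_setT y; rewrite -coverP inE (negbTE nAy).
Qed.

Lemma restrict_bipart A X : restrict (bipart A) X = [set A :&: X; ~: A :&: X].
Proof. by rewrite /restrict imsetU1 imset_set1. Qed.

Lemma restrict_setT P : restrict P setT = P.
Proof. by rewrite /restrict (eq_imset (g := id)) ?imset_id // => B; rewrite setIT. Qed.

Lemma pdist_le P Q X : restrict P X = restrict Q X -> (pdist P Q <= #|~: X|)%N.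
Proof.
move/eqP=> PQ; rewrite /pdist -minEnat.
exact: (bigmin_le_cond n (fun Y => #|~: Y|) (P := fun Y => restrict P Y == restrict Q Y) PQ).
Qed.

Lemma pdist_attained A C : exists2 X,
  restrict (bipart A) X = restrict (bipart C) X & pdist (bipart A) (bipart C) = #|~: X|.
Proof.
have AC0 : restrict (bipart A) set0 == restrict (bipart C) set0.
  by rewrite !restrict_bipart !setI0.
rewrite /pdist -minEnat (bigmin_eq_arg n set0 _ (fun X => #|~: X|) AC0) => [|X _].
  by case: arg_minP => // X /eqP ACX _; exists X.
by have := max_card (~: X); rewrite card_ord.
Qed.

Lemma pdist_eq0 A C : pdist (bipart A) (bipart C) = 0%N -> bipart A = bipart C.
Proof.
have [X ACX ->] := pdist_attained A C; move/eqP.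
rewrite cards_eq0 -setCT (inj_eq (@setC_inj _)) => /eqP XT.
by rewrite -(restrict_setT (bipart A)) -(restrict_setT (bipart C)) -XT.
Qed.

Lemma agree_off1 A C x : C :&: [set~ x] = A :&: [set~ x] -> C = A \/ C = toggle A x.
Proof.
move=> /setP CA; have off y : y != x -> (y \in C) = (y \in A).
  by move=> yx; have := CA y; rewrite !inE yx !andbT.
have [xCA | xCA] := eqVneq (x \in C) (x \in A); [left | right]; apply/setP => y.
  by have [-> // | yx] := eqVneq y x; apply: off.
rewrite in_toggle; have [-> | yx] := eqVneq y x; last by rewrite off //; case: (y \in A).
by move: xCA; case: (x \in C); case: (x \in A).
Qed.

Lemma bipart_toggle_neq A x y : y != x -> bipart (toggle A x) != bipart A.
Proof.
move=> yx; apply/negP => /eqP eqA.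
have : toggle A x \in bipart A by rewrite -eqA !inE eqxx.
rewrite !inE => /orP[]/eqP/setP.
- by move/(_ x); rewrite in_toggle eqxx; case: (x \in A).
- by move/(_ y); rewrite in_toggle inE (negbTE yx); case: (y \in A).
Qed.

Lemma bipart_toggle_inj A x y z : z != x -> z != y ->
  bipart (toggle A x) = bipart (toggle A y) -> x = y.
Proof.
move=> zx zy eqxy; have : toggle A x \in bipart (toggle A y) by rewrite -eqxy !inE eqxx.
rewrite !inE => /orP[]/eqP/setP.
- have [// | xy] := eqVneq x y; move/(_ x); rewrite !in_toggle eqxx (negbTE xy).
  by case: (x \in A).
- by move/(_ z); rewrite in_setC !in_toggle (negbTE zx) (negbTE zy); case: (z \in A).
Qed.

Lemma pdist_bipart_toggle A x y : y != x -> pdist (bipart A) (bipart (toggle A x)) = 1%N.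
Proof.
move=> yx; apply/eqP; rewrite eqn_leq; apply/andP; split.
  rewrite -(cards1 x) -[[set x]]setCK; apply: pdist_le.
  rewrite !restrict_bipart -toggleC; congr [set _; _]; apply/setP => z;
    by rewrite !inE; case: (z \in A); case: (z == x).
have [/pdist_eq0 eqA | //] := posnP (pdist (bipart A) (bipart (toggle A x))).
by have := bipart_toggle_neq A yx; rewrite eqA eqxx.
Qed.

Lemma pdist1_bipart A C : pdist (bipart A) (bipart C) = 1%N ->
  exists x, bipart C = bipart (toggle A x).
Proof.
move=> AC1; have CA : bipart C != bipart A.
  apply/eqP => CA; have := @pdist_le (bipart A) (bipart C) setT.
  by rewrite AC1 CA setCT cards0 => /(_ erefl).
have [X ACX] := pdist_attained A C; rewrite AC1 => /esym/eqP/cards1P[x].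
move/(congr1 (@setC _)); rewrite setCK => Xx; exists x.
have : C :&: [set~ x] \in [set A :&: [set~ x]; ~: A :&: [set~ x]].
  by rewrite -Xx -restrict_bipart ACX restrict_bipart; apply/set2P; left.
rewrite !inE => /orP[]/eqP/agree_off1[] eqC; rewrite eqC ?toggleC ?bipartC // in CA *;
  by rewrite eqxx in CA.
Qed.

End Bipartitions.

Local Open Scope ring_scope.

Section Orientation.
Variable R : comPzRingType.
Implicit Types a b c d : 'rV[R]_2.

Definition orient a b c : R :=
  (b ord0 0 - a ord0 0) * (c ord0 1 - a ord0 1)
  - (b ord0 1 - a ord0 1) * (c ord0 0 - a ord0 0).

Lemma orient_swap a b c : orient b a c = - orient a b c.
Proof. by rewrite /orient; ring. Qed.

Lemma orient_rot a b c : orient b c a = orient a b c.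
Proof. by rewrite /orient; ring. Qed.

Lemma orient_aba a b : orient a b a = 0.
Proof. by rewrite /orient; ring. Qed.

Lemma orient_abb a b : orient a b b = 0.
Proof. by rewrite /orient; ring. Qed.

Lemma row2P a b : a ord0 0 = b ord0 0 -> a ord0 1 = b ord0 1 -> a = b.
Proof.
move=> e0 e1; apply/rowP => i; have [] : i = 0 \/ i = 1.
  by case: i => [[|[|]]] // ?; [left | right]; apply/val_inj.
all: by move=> ->.
Qed.

Lemma orient_affine (I : finType) (w : I -> R) (q : I -> 'rV[R]_2) a b :
  \sum_i w i = 1 -> orient a b (\sum_i w i *: q i) = \sum_i w i * orient a b (q i).
Proof.
move=> w1; have coord k : (\sum_i w i *: q i) ord0 k = \sum_i w i * q i ord0 k.
  by rewrite summxE; apply: eq_bigr => i _; rewrite mxE.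
set u0 := b ord0 0 - a ord0 0; set u1 := b ord0 1 - a ord0 1.
have expand i : w i * orient a b (q i) = u0 * (w i * q i ord0 1) - u1 * (w i * q i ord0 0)
    + (u1 * a ord0 0 - u0 * a ord0 1) * w i.
  by rewrite /orient -/u0 -/u1; ring.
rewrite (eq_bigr _ (fun i _ => expand i)) big_split sumrB /= -!mulr_sumr w1.
by rewrite /orient !coord -/u0 -/u1; ring.
Qed.

Lemma orient_swap23 a b c : orient a c b = - orient a b c.
Proof. by rewrite /orient; ring. Qed.

Lemma orient_sum a b c d : orient d b c + orient a d c + orient a b d = orient a b c.
Proof. by rewrite /orient; ring. Qed.

End Orientation.

Section Cramer.
Variable F : fieldType.
Implicit Types a b c d : 'rV[F]_2.

Lemma orient_barycentric a b c d : orient a b c != 0 ->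
  d = (orient d b c / orient a b c) *: a + (orient a d c / orient a b c) *: b
      + (orient a b d / orient a b c) *: c.
Proof. by move=> abc; apply: row2P; rewrite !mxE /orient; field. Qed.

Lemma orient_lines_meet a b c d :
  orient c d b - orient c d a != 0 -> orient a b c - orient a b d != 0 ->
  (orient c d b / (orient c d b - orient c d a)) *: a
    + (- orient c d a / (orient c d b - orient c d a)) *: b =
  (- orient a b d / (orient a b c - orient a b d)) *: c
    + (orient a b c / (orient a b c - orient a b d)) *: d.
Proof. by move=> e f; apply: row2P; rewrite !mxE /orient; field; rewrite -/orient. Qed.

End Cramer.

Lemma lt_norm_subr (R : realDomainType) (x y : R) : x * y < 0 -> `|y| < `|x - y|.
Proof.
rewrite mulr_lt0 => /and3P[x0 y0]; have [yn | yp] := ltP y 0; rewrite ?addbT ?addbF.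
  rewrite -leNgt le_eqVlt eq_sym (negbTE x0) /= => xp.
  by rewrite ltr0_norm // gtr0_norm; lra.
have {}yp : 0 < y by rewrite lt_def y0.
by move=> xn; rewrite gtr0_norm // ltr0_norm; lra.
Qed.

Section Shear.
Variables (R : realFieldType) (t : R).
Implicit Types a b c d : 'rV[R]_2.

Definition abscissa a : R := a ord0 0 + t * a ord0 1.

(* The vertical offset of c above the line ab in the coordinates (abscissa, y). *)
Definition height a b c : R := orient a b c / (abscissa b - abscissa a).

Lemma heightC a b c : height a b c = height b a c.
Proof. by rewrite /height orient_swap -opprB invrN mulrNN. Qed.

Lemma heightK a b c : abscissa a != abscissa b ->
  height a b c * (abscissa b - abscissa a) = orient a b c.
Proof. by move=> ab; rewrite divfK // subr_eq0 eq_sym. Qed.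

Lemma orient_pluecker a b c d :
  orient a b c * (abscissa d - abscissa a)
  = (abscissa c - abscissa a) * orient a b d - (abscissa b - abscissa a) * orient a c d.
Proof. by rewrite /orient /abscissa; ring. Qed.

Lemma height_lt a b c d : abscissa b != abscissa a -> abscissa c != abscissa a ->
  abscissa d != abscissa a -> height a b d * height a c d < 0 ->
  `|height a d c| < `|height a b c|.
Proof.
rewrite -!(subr_eq0 (abscissa _)) => e0 f0 g0 sign.
have adc : orient a d c = - orient a c d by rewrite /orient; ring.
have := orient_pluecker a b c d; move: sign.
rewrite /height adc; set e := abscissa b - abscissa a; set f := abscissa c - abscissa a.
set g := abscissa d - abscissa a; set abc := orient a b c; set abd := orient a b d.
set acd := orient a c d => sign pl.
have -> : abc / e = f / g * (abd / e - acd / f).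
  by rewrite -[abc](mulfK g0) pl -/g; field; rewrite f0 e0 g0.
have -> : - acd / g = - (f / g * (acd / f)) by field; rewrite f0 g0.
rewrite normrN !(normrM (f / g)) ltr_pM2l ?normr_gt0 ?mulf_neq0 ?invr_eq0 //.
exact: lt_norm_subr sign.
Qed.

End Shear.

Lemma exists_abscissa_inj (R : realFieldType) (I : finType) (q : I -> 'rV[R]_2) :
  injective q -> exists t, forall a b, a != b -> abscissa t (q a) != abscissa t (q b).
Proof.
move=> q_inj; pose F a b := `|q a ord0 0 - q b ord0 0| / `|q a ord0 1 - q b ord0 1|.
have F_ge0 a b : 0 <= F a b by rewrite divr_ge0.
pose S := \sum_a \sum_b F a b; have S_ge0 : 0 <= S by do 2 apply: sumr_ge0 => ? _.
have F_le a b : F a b <= S.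
  rewrite /S (bigD1 a) //= (bigD1 b) //= -addrA lerDl addr_ge0 ?sumr_ge0 // => *.
  exact: sumr_ge0.
exists (1 + S) => a b; apply: contra_neq => /eqP; rewrite /abscissa.
have [ey | ey] := eqVneq (q a ord0 1) (q b ord0 1).
  by rewrite ey => /eqP/addIr ex; apply: q_inj; apply: row2P.
rewrite -subr_eq0 opprD addrACA -mulrBr addr_eq0 => /eqP ex.
have := F_le a b; rewrite /F ex normrN normrM mulfK ?normr_eq0 ?subr_eq0 //.
by rewrite ger0_norm ?addr_ge0 // => ?; exfalso; lra.
Qed.

Section ConvexHull.
Variables (R : realType) (n : nat) (p : 'I_n -> 'rV[R]_2).
Implicit Types (B C Z : {set 'I_n}) (x u v : 'rV[R]_2).

Lemma in_conv3 B a b c (al be ga : R) : a \in B -> b \in B -> c \in B ->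
  0 <= al -> 0 <= be -> 0 <= ga -> al + be + ga = 1 ->
  in_conv p B (al *: p a + be *: p b + ga *: p c).
Proof.
move=> aB bB cB al0 be0 ga0 sum1.
pose w m : R := al * (m == a)%:R + be * (m == b)%:R + ga * (m == c)%:R.
have sum_ind (y : R) e : \sum_(m : 'I_n) y * (m == e)%:R = y.
  by rewrite (bigD1 e) //= eqxx mulr1 big1 ?addr0 // => m /negbTE ->; rewrite mulr0.
have sumv_ind (y : R) e : \sum_(m : 'I_n) (y * (m == e)%:R) *: p m = y *: p e.
  rewrite (bigD1 e) //= eqxx mulr1 big1 ?addr0 // => m /negbTE ->.
  by rewrite mulr0 scale0r.
exists w; split.
- by move=> m; rewrite !addr_ge0 ?mulr_ge0.
- move=> m mB; rewrite /w.
  by do 3 (rewrite (_ : (m == _) = false) ?mulr0 ?addr0; last by apply: contraNF mB => /eqP->).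
- by rewrite !big_split /= !sum_ind.
- by under eq_bigr do rewrite !scalerDl; rewrite !big_split /= !sumv_ind.
Qed.

Lemma in_conv2 B a b (al be : R) : a \in B -> b \in B -> 0 <= al -> 0 <= be ->
  al + be = 1 -> in_conv p B (al *: p a + be *: p b).
Proof.
move=> aB bB al0 be0 sum1; have := in_conv3 aB bB bB al0 be0 (lexx 0).
by rewrite scale0r !addr0; apply.
Qed.

Lemma in_conv1 B a : a \in B -> in_conv p B (p a).
Proof.
move=> aB; have := in_conv3 aB aB aB ler01 (lexx 0) (lexx 0).
by rewrite !scale0r !addr0 scale1r; apply.
Qed.

Lemma in_conv_single Z a x : in_conv p Z x -> (forall m, m \in Z -> m = a) -> x = p a.
Proof.
case=> w [_ wZ w1 ->] Za; have wa m : m != a -> w m = 0.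
  by move=> ma; apply: wZ; apply: contra ma => /Za ->.
have w1a : w a = 1 by rewrite -w1 (bigD1 a) //= big1 ?addr0 // => m /wa.
by rewrite (bigD1 a) //= w1a scale1r big1 ?addr0 // => m /wa ->; rewrite scale0r.
Qed.

Lemma orient_in_conv_ge0 B u v x : (forall m, m \in B -> 0 <= orient u v (p m)) ->
  in_conv p B x -> 0 <= orient u v x.
Proof.
move=> Bge0 [w [w0 wB w1 ->]]; rewrite orient_affine //; apply: sumr_ge0 => m _.
by have [mB | /wB ->] := boolP (m \in B); rewrite ?mul0r // mulr_ge0 ?Bge0.
Qed.

Lemma in_conv_on_line B u v x : (forall m, m \in B -> 0 <= orient u v (p m)) ->
  in_conv p B x -> orient u v x <= 0 -> in_conv p [set m in B | orient u v (p m) == 0] x.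
Proof.
move=> Bge0 [w [w0 wB w1 ->]] xle0.
have term_ge0 m : 0 <= w m * orient u v (p m).
  by have [mB | /wB ->] := boolP (m \in B); rewrite ?mul0r // mulr_ge0 ?Bge0.
have /(psumr_eq0P (fun m _ => term_ge0 m)) term0 : \sum_m w m * orient u v (p m) = 0.
  by apply/eqP; rewrite eq_le sumr_ge0 // andbT -orient_affine.
exists w; split => // m; rewrite inE negb_and => /orP[/wB // | mL].
by apply/eqP; have /eqP := term0 m isT; rewrite mulf_eq0 (negbTE mL) orbF.
Qed.

End ConvexHull.

Section Radon.
Variables (R : realType) (n : nat) (p : 'I_n -> 'rV[R]_2).
Implicit Types (C : {set 'I_n}) (a b c d : 'I_n).

Definition hulls_meet C := exists x, in_conv p C x /\ in_conv p (~: C) x.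

Lemma radon_bipart C : C != set0 -> C != setT -> hulls_meet C -> radon_partition p (bipart C).
Proof.
move=> C0 CT [x [xC xCc]]; split; first exact: two_partition_bipart.
by exists x => B; rewrite !inE => /orP[]/eqP->.
Qed.

Lemma radon_bipart_meet C : radon_partition p (bipart C) -> hulls_meet C.
Proof. by case=> _ [x xP]; exists x; split; apply: xP; rewrite !inE eqxx ?orbT. Qed.

Lemma hulls_meet_triangle C a b c d : a \in C -> b \in C -> c \in C -> d \notin C ->
  0 < orient (p a) (p b) (p c) -> 0 <= orient (p d) (p b) (p c) ->
  0 <= orient (p a) (p d) (p c) -> 0 <= orient (p a) (p b) (p d) -> hulls_meet C.
Proof.
move=> aC bC cC dC abc dbc adc abd; exists (p d); split; last by apply: in_conv1; rewrite inE.
rewrite [p d](orient_barycentric (p d) (lt0r_neq0 abc)).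
apply: in_conv3; rewrite ?divr_ge0 ?(ltW abc) //.
by rewrite -!mulrDl orient_sum divff // lt0r_neq0.
Qed.

Lemma hulls_meet_cross C a b c d : a \in C -> b \in C -> c \notin C -> d \notin C ->
  orient (p a) (p b) (p d) < 0 < orient (p a) (p b) (p c) ->
  orient (p c) (p d) (p a) < 0 < orient (p c) (p d) (p b) -> hulls_meet C.
Proof.
move=> aC bC cC dC /andP[abd abc] /andP[cda cdb].
set e := orient (p c) (p d) (p b) - orient (p c) (p d) (p a).
set f := orient (p a) (p b) (p c) - orient (p a) (p b) (p d).
have e_gt0 : 0 < e by rewrite /e; lra.
have f_gt0 : 0 < f by rewrite /f; lra.
have meet := orient_lines_meet (lt0r_neq0 e_gt0) (lt0r_neq0 f_gt0).
exists ((orient (p c) (p d) (p b) / e) *: p a + (- orient (p c) (p d) (p a) / e) *: p b).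
split; last rewrite meet; apply: in_conv2; rewrite ?inE ?divr_ge0 ?oppr_ge0 ?ltW //.
all: by rewrite -mulrDl ?[- _ + _]addrC divff // lt0r_neq0.
Qed.

Hypothesis gp : general_position p.

Lemma orient_neq0 u v m : u != v -> v != m -> u != m -> orient (p u) (p v) (p m) != 0.
Proof. exact: gp.2. Qed.

Lemma orient_eq0 u v m : u != v -> (orient (p u) (p v) (p m) == 0) = (m == u) || (m == v).
Proof.
move=> uv; apply/idP/idP => [| /orP[]/eqP->]; rewrite ?orient_aba ?orient_abb //.
by apply: contraTT; rewrite negb_or => /andP[mu mv]; apply: orient_neq0; rewrite // eq_sym.
Qed.

Lemma not_hulls_meet_halfplanes C u v : u != v ->
  (forall m, m != u -> m != v -> (m \in C) = (0 < orient (p u) (p v) (p m))) ->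
  ~ hulls_meet C.
Proof.
move=> uv sideC [x [xC xCc]].
have C_ge0 m : m \in C -> 0 <= orient (p u) (p v) (p m).
  have [/orP[]/eqP-> _ | ] := boolP ((m == u) || (m == v)); rewrite ?orient_aba ?orient_abb //.
  by rewrite negb_or => /andP[mu mv]; rewrite sideC // => /ltW.
have Cc_ge0 m : m \in ~: C -> 0 <= orient (p v) (p u) (p m).
  rewrite inE orient_swap oppr_ge0.
  have [/orP[]/eqP-> _ | ] := boolP ((m == u) || (m == v)); rewrite ?orient_aba ?orient_abb //.
  by rewrite negb_or => /andP[mu mv]; rewrite sideC // -leNgt.
have uvx_le0 : orient (p u) (p v) x <= 0.
  by rewrite -oppr_ge0 -orient_swap; apply: orient_in_conv_ge0 Cc_ge0 xCc.
have vux_le0 : orient (p v) (p u) x <= 0.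
  by rewrite orient_swap oppr_le0; apply: orient_in_conv_ge0 C_ge0 xC.
have xC0 := in_conv_on_line C_ge0 xC uvx_le0.
have xCc0 : in_conv p [set m in ~: C | orient (p u) (p v) (p m) == 0] x.
  have := in_conv_on_line Cc_ge0 xCc vux_le0; congr (in_conv _ _ _).
  by apply/setP => m; rewrite !inE orient_swap oppr_eq0.
have xu : x = p u.
  have [vC | vCc] := boolP (v \in C); [move: xCc0 | move: xC0] => /in_conv_single; apply=> m;
    rewrite !inE orient_eq0 // => /andP[mC /orP[/eqP // | /eqP mv]];
    by rewrite mv ?vC ?(negbTE vCc) in mC.
have xv : x = p v.
  have [uC | uCc] := boolP (u \in C); [move: xCc0 | move: xC0] => /in_conv_single; apply=> m;
    rewrite !inE orient_eq0 // => /andP[mC /orP[/eqP mu | /eqP //]];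
    by rewrite mu ?uC ?(negbTE uCc) in mC.
by move/eqP: uv; apply; apply: gp.1; rewrite -xu -xv.
Qed.

End Radon.

Section Wedge.
Variables (R : realType) (n : nat) (p : 'I_n -> 'rV[R]_2).
Hypothesis gp : general_position p.
Local Notation D a b c := (orient (p a) (p b) (p c)).

(* Every other point lies in the double wedge at k spanned by the lines ki and kj,
   either beyond k or beyond the edge ij. *)
Definition wedge_signs i j k := forall w, w != i -> w != j -> w != k ->
  0 < D i j w * D i k w /\ 0 < D i j w * D k j w.

Lemma wedge_signs_swap i j k : wedge_signs i j k -> wedge_signs j i k.
Proof.
move=> ijk w wj wi wk; rewrite (orient_swap (p i) (p j)) (orient_swap (p k) (p j)).
by rewrite (orient_swap (p i) (p k)) !mulrNN; case: (ijk w wi wj wk).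
Qed.

Section MinHeight.
Variables (t : R) (t_inj : forall a b, a != b -> abscissa t (p a) != abscissa t (p b)).
Local Notation x a := (abscissa t (p a)).
Local Notation h a b c := (height t (p a) (p b) (p c)).

Definition min_height i j k := [/\ i != j, i != k, j != k & forall a b c,
  a != b -> a != c -> b != c -> `|h i j k| <= `|h a b c| ].

Lemma exists_min_height : (2 < n)%N -> exists i j k, min_height i j k.
Proof.
move=> n_gt2; have n_gt0 : (0 < n)%N by lia.
have n_gt1 : (1 < n)%N by lia.
pose P (u : 'I_n * 'I_n * 'I_n) := [&& u.1.1 != u.1.2, u.1.1 != u.2 & u.1.2 != u.2].
have P0 : P (Ordinal n_gt0, Ordinal n_gt1, Ordinal n_gt2) by [].
case: (arg_minP (fun u => `|h u.1.1 u.1.2 u.2|) P0) => [[[i j] k]] /and3P[ij ik jk] minh.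
by exists i, j, k; split => // a b c ab ac bc; apply: (minh (a, b, c)); apply/and3P.
Qed.

Lemma min_heightC i j k : min_height i j k -> min_height j i k.
Proof.
case=> ij ik jk minh; split => // [|a b c ab ac bc]; first by rewrite eq_sym.
by rewrite heightC; apply: minh.
Qed.

Lemma height_neq0 a b c : a != b -> a != c -> b != c -> h a b c != 0.
Proof.
move=> ab ac bc; rewrite mulf_neq0 ?orient_neq0 // invr_eq0 subr_eq0 t_inj //.
by rewrite eq_sym.
Qed.

Lemma min_height_dist i j k : min_height i j k -> `|x k - x i| <= `|x j - x i|.
Proof.
case=> ij ik jk minh; have kj : k != j by rewrite eq_sym.
have h_gt0 : 0 < `|h i j k| by rewrite normr_gt0 height_neq0.
have xki_gt0 : 0 < `|x k - x i| by rewrite normr_gt0 subr_eq0 eq_sym t_inj.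
have areas : `|h i j k| * `|x j - x i| = `|h i k j| * `|x k - x i|.
  by rewrite -!normrM !heightK ?t_inj // orient_swap23 normrN.
by rewrite -(ler_pM2l h_gt0) areas ler_pM2r // minh.
Qed.

Lemma min_height_between i j k : min_height i j k -> x i < x j -> x i < x k < x j.
Proof.
move=> ijk ij; have [_ ik jk _] := ijk; have xji : 0 <= x j - x i by rewrite subr_ge0 ltW.
have := min_height_dist ijk; have := min_height_dist (min_heightC ijk).
rewrite [`|x i - x j|]distrC (ger0_norm xji) !ler_norml => /andP[? ?] /andP[? ?].
by have := t_inj ik; have := t_inj jk; rewrite !neq_lt => /orP[] ? /orP[] ?; apply/andP; lra.
Qed.

Lemma min_height_sign i j k w : min_height i j k -> w != i -> w != j -> w != k ->
  0 < h i j w * h i k w.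
Proof.
case=> ij ik jk minh wi wj wk.
have [iw jw kw] : [/\ i != w, j != w & k != w] by split; rewrite eq_sym.
have [ji ki] : j != i /\ k != i by split; rewrite eq_sym.
rewrite lt_def mulf_neq0 ?height_neq0 //= leNgt; apply/negP => neg.
have := height_lt (t_inj ji) (t_inj ki) (t_inj wi) neg.
by rewrite ltNge minh.
Qed.

Lemma min_height_wedge i j k : min_height i j k -> x i < x j -> wedge_signs i j k.
Proof.
move=> ijk ij w wi wj wk; have [i_j i_k j_k _] := ijk.
have /andP[ik kj] := min_height_between ijk ij.
have base_i := min_height_sign ijk wi wj wk.
have base_j := min_height_sign (min_heightC ijk) wj wi wk.
split.
  have -> : D i j w * D i k w = h i j w * h i k w * ((x j - x i) * (x k - x i)).
    by rewrite mulrACA !heightK ?t_inj.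
  by apply: mulr_gt0 => //; apply: mulr_gt0; rewrite subr_gt0.
have -> : D i j w * D k j w = h j i w * h j k w * ((x j - x i) * (x j - x k)).
  by rewrite mulrACA (heightC t (p j) (p k)) -(heightC t (p i)) !heightK ?t_inj // eq_sym.
by apply: mulr_gt0 => //; apply: mulr_gt0; rewrite subr_gt0.
Qed.

End MinHeight.

Lemma exists_wedge : (2 < n)%N ->
  exists i j k, [/\ i != j, i != k, j != k, 0 < D i j k & wedge_signs i j k].
Proof.
move=> n_gt2; have [t t_inj] := exists_abscissa_inj gp.1.
have [i0 [j0 [k0 ijk0]]] := exists_min_height t n_gt2.
have [i [j [k [ijk ij]]]] : exists i j k,
    min_height t i j k /\ abscissa t (p i) < abscissa t (p j).
  have [i0j0 _ _ _] := ijk0; move: (t_inj _ _ i0j0); rewrite neq_lt => /orP[lt | gt].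
    by exists i0, j0, k0.
  by exists j0, i0, k0; split; first exact: min_heightC.
have wedge := min_height_wedge t_inj ijk ij; have [i_j i_k j_k _] := ijk.
have := orient_neq0 gp i_j j_k i_k; rewrite neq_lt => /orP[neg | pos]; last by exists i, j, k.
exists j, i, k; split => //; first by rewrite eq_sym.
  by rewrite orient_swap oppr_gt0.
exact: wedge_signs_swap.
Qed.

End Wedge.

Section Degree.
Variables (R : realType) (n : nat) (p : 'I_n -> 'rV[R]_2).
Hypotheses (gp : general_position p) (n_gt4 : (4 < n)%N).
Variables i j k : 'I_n.
Local Notation D a b c := (orient (p a) (p b) (p c)).
Hypotheses (ij : i != j) (ik : i != k) (jk : j != k) (ijk_gt0 : 0 < D i j k).
Hypothesis wedge : wedge_signs p i j k.

Definition block := [set m | (m == i) || (m == j) || (m != k) && (0 < D i j m)].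

Definition others := ~: [set i; j; k].

Lemma in_others m : (m \in others) = [&& m != i, m != j & m != k].
Proof. by rewrite !inE !negb_or andbA. Qed.

Lemma card_others : #|others| = (n - 3)%N.
Proof. by rewrite cardsCs setCK card_ord -setUA cardsU1 cards2 !inE negb_or ij ik jk. Qed.

Lemma others_sign m : m \in others ->
  m \in block /\ [/\ 0 < D i j m, 0 < D i k m & 0 < D k j m] \/
  m \notin block /\ [/\ D i j m < 0, D i k m < 0 & D k j m < 0].
Proof.
rewrite in_others => /and3P[mi mj mk]; have [ikm kjm] := wedge mi mj mk.
have mB : (m \in block) = (0 < D i j m) by rewrite inE (negbTE mi) (negbTE mj) mk.
rewrite mB; have [ijm | ijm | ijm0] := ltgtP (D i j m) 0.
- by right; move: ikm kjm; rewrite !nmulr_rgt0 // => -> ->.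
- by left; move: ikm kjm; rewrite !pmulr_rgt0 // => -> ->.
- by move: ikm; rewrite ijm0 mul0r ltxx.
Qed.

Lemma block_i : i \in block. Proof. by rewrite inE eqxx. Qed.
Lemma block_j : j \in block. Proof. by rewrite inE eqxx orbT. Qed.
Lemma block_k : k \notin block.
Proof. by rewrite inE eqxx !(eq_sym k) (negbTE ik) (negbTE jk). Qed.

Lemma radon_other (C : {set 'I_n}) y : i \in C -> j \in C -> k \notin C -> y \in others ->
  (y \in C) = (y \in block) -> radon_partition p (bipart C).
Proof.
move=> iC jC kC /others_sign + yCB; rewrite -yCB => signs; apply: radon_bipart.
- by apply/set0Pn; exists i.
- by apply: contraNneq kC => ->; rewrite inE.
move: signs.
case=> [[yC [ijy iky kjy]] | [yC [ijy iky kjy]]].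
  by apply: (hulls_meet_triangle iC jC yC kC ijy); rewrite ltW.
apply: (hulls_meet_cross iC jC kC yC); first by rewrite ijy ijk_gt0.
by rewrite orient_rot iky orient_swap23 oppr_gt0 kjy.
Qed.

Lemma others_neq x : exists2 y, y \in others & y != x.
Proof.
have /card_gt1P[y [z [yo zo yz]]] : (1 < #|others|)%N by rewrite card_others; lia.
by have [xy | ] := eqVneq y x; [exists z; rewrite // -xy eq_sym | exists y].
Qed.

Lemma radon_block : radon_partition p (bipart block).
Proof.
have [y yo _] := others_neq i.
exact: radon_other block_i block_j block_k yo erefl.
Qed.

Lemma radon_toggle x : x \in others -> radon_partition p (bipart (toggle block x)).
Proof.
rewrite in_others => /and3P[xi xj xk]; have [y yo yx] := others_neq x.
apply: (radon_other (y := y)); rewrite // !in_toggle ?block_i ?block_j ?(negbTE block_k).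
- by rewrite (eq_sym i) (negbTE xi).
- by rewrite (eq_sym j) (negbTE xj).
- by rewrite (eq_sym k) (negbTE xk).
- by rewrite (negbTE yx); case: (y \in block).
Qed.

Lemma not_radon_toggle v : v \in [set i; j; k] -> ~ radon_partition p (bipart (toggle block v)).
Proof.
move=> v3 /radon_bipart_meet; set C := toggle block v.
have side m : m \in others ->
    [/\ (m \in C) = (0 < D i j m), (m \in C) = (0 < D i k m) & (m \in C) = (0 < D k j m)].
  move=> mo; have -> : m \in C = (m \in block).
    rewrite in_toggle; have /negbTE-> : m != v by apply: contraTneq mo => ->; rewrite inE v3.
    by case: (m \in block).
  case/others_sign: mo => -[mB [ijm ikm kjm]]; first by rewrite mB.
  by rewrite (negbTE mB) (lt_gtF ijm) (lt_gtF ikm) (lt_gtF kjm).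
have others3 m : m != i -> m != j -> m != k -> m \in others by rewrite in_others => -> -> ->.
rewrite !inE -orbA in v3; case/or3P: v3 => /eqP v_eq; rewrite {}/C {}v_eq in side *.
- apply: (not_hulls_meet_halfplanes gp (u := k) (v := j)); first by rewrite eq_sym.
  move=> m mk mj; have [-> | mi] := eqVneq m i; last by case: (side m (others3 _ mi mj mk)).
  by rewrite in_toggle block_i eqxx orient_rot orient_swap23 oppr_gt0 (lt_gtF ijk_gt0).
- apply: (not_hulls_meet_halfplanes gp (u := i) (v := k)) => // m mi mk.
  have [-> | mj] := eqVneq m j; last by case: (side m (others3 _ mi mj mk)).
  by rewrite in_toggle block_j eqxx orient_swap23 oppr_gt0 (lt_gtF ijk_gt0).
- apply: (not_hulls_meet_halfplanes gp (u := i) (v := j)) => // m mi mj.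
  have [-> | mk] := eqVneq m k; last by case: (side m (others3 _ mi mj mk)).
  by rewrite in_toggle (negbTE block_k) eqxx ijk_gt0.
Qed.

End Degree.

Theorem proposition4p2 (R : realType) (n : nat) (p : 'I_n -> 'rV[R]_2) :
  (4 < n)%N -> general_position p ->
  exists P : {set {set 'I_n}},
    radon_partition p P /\
    exists N : {set {set {set 'I_n}}},
      #|N| = (n - 3)%N /\ (forall Q, Q \in N <-> radon_adj p P Q).
Proof.
move=> n_gt4 gp; have [i [j [k [ij ik jk ijk wedge]]]] := exists_wedge gp (ltnW (ltnW n_gt4)).
have i_others x : x \in others i j k -> i != x by rewrite in_others eq_sym => /andP[].
set A := block p i j k.
exists (bipart A); split; first exact: radon_block.
exists [set bipart (toggle A x) | x in others i j k]; split.
  rewrite card_in_imset ?card_others // => x y /i_others ix /i_others iy.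
  exact: bipart_toggle_inj ix iy.
move=> Q; split.
  case/imsetP=> x xo ->; split; first exact: radon_toggle.
  exact: pdist_bipart_toggle (i_others _ xo).
case=> RQ; have [C QC] := two_partitionP RQ.1; rewrite QC => /pdist1_bipart[x QA].
rewrite QC QA in RQ *; apply: imset_f; apply: contraT; rewrite inE negbK => x3.
by have := not_radon_toggle gp ij ik jk ijk wedge x3.
Qed.
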